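(* Let $m,n$ be positive integers such that $n$ reduces to $m$. Let $a$ be the smallest integer with $2^am\ge n$. Then $|\mathcal{M}_x(n)|\le|\mathcal{M}_x(2^am)|$ for all $x\in\mathbb{R}$.
   Context: For a positive integer $n$, $\mathcal{D}(n)$ is the set of positive divisors of $n$, and $\lambda(n)$ is the least prime factor of $n$ if $n\ge2$, with $\lambda(1)=1$. For positive integers $m,n$, a function $f:\mathcal{D}(n)\to\mathcal{D}(m)$ is called reducing if for all $d,d'\in\mathcal{D}(n)$: (a) $f(d)\le d$; (b) $\frac{m/f(d)}{n/d}\le\min\{1,\ \lambda(m/f(d))/\lambda(n/d)\}$; (c) if $f(d)=2^if(d')$ for some $i\in\mathbb{Z}$, then $d=2^jd'$ for some $j\in\mathbb{Z}$. We say $n$ reduces to $m$ if a reducing function $\mathcal{D}(n)\to\mathcal{D}(m)$ exists. For $x\in\mathbb{R}$, a positive divisor $d$ of $n$ is maximal with respect to $x$ if $d\le x$ and there is no other positive divisor $d'$ of $n$ with $d'\le x$ and $d\mid d'$; $\mathcal{M}_x(n)$ denotes the set of such divisors. *)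

From mathcomp Require Import all_boot all_order all_algebra.
From mathcomp Require Import reals.
Set Implicit Arguments. Unset Strict Implicit. Unset Printing Implicit Defensive.
Import Order.TTheory GRing.Theory Num.Theory.
Local Open Scope ring_scope.

(* lambda(n): least prime factor of n >= 2, with lambda(1) = 1.
   MathComp's [pdiv] is exactly this (pdiv 1 = 1). *)
Definition lpf (n : nat) : nat := pdiv n.

(* f : D(n) -> D(m) is represented by a total function nat -> nat,
   constrained only on the positive divisors of n (n > 0 assumed where used). *)
Definition reducing (n m : nat) (f : nat -> nat) : Prop :=
  (forall d, (d %| n)%N -> (f d %| m)%N) /\
  (forall d, (d %| n)%N -> (f d <= d)%N) /\
  (forall d, (d %| n)%N ->
     ((m %/ f d)%:R / (n %/ d)%:R : rat)
       <= Num.min 1 ((lpf (m %/ f d))%:R / (lpf (n %/ d))%:R)) /\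
  (forall d d', (d %| n)%N -> (d' %| n)%N ->
     (exists i : int, ((f d)%:R : rat) = 2%:R ^ i * (f d')%:R) ->
     exists j : int, (d%:R : rat) = 2%:R ^ j * d'%:R).

Definition reduces (n m : nat) : Prop := exists f : nat -> nat, reducing n m f.

(* M_x(n): the divisors d of n with d <= x such that no other divisor d' of n
   with d' <= x is a multiple of d. (divisors n is duplicate-free.) *)
Definition Mx (R : realType) (x : R) (n : nat) : seq nat :=
  [seq d <- divisors n |
     (d%:R <= x) &&
     all (fun d' => (d'%:R <= x) ==> (d %| d')%N ==> (d' == d)) (divisors n)].

From mathcomp Require Import all_boot all_order all_algebra.
From mathcomp Require Import reals.
From mathcomp Require Import zify.
Set Implicit Arguments. Unset Strict Implicit. Unset Printing Implicit Defensive.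
Import Order.TTheory GRing.Theory Num.Theory.
Local Open Scope ring_scope.

(* For d in M_x(n), [lift d] multiplies f(d) by the largest power of 2 that
   keeps it at most x and a divisor of 2^a m, i.e. with exponent at most
   a + v_2(m/f(d)).  If the exponent stops below this cap, one more doubling
   already exceeds x.  If it reaches the cap, every prime p with
   (lift d) p | 2^a m divides m/f(d); condition (b) and n <= 2^a m then give
   d lambda(n/d) <= 2^a f(d) p, while d lambda(n/d) > x by the maximality of d.
   Either way [lift d] lies in M_x(2^a m).  Two divisors with the same lift have
   f-values differing by a power of 2, hence by (c) they differ by a power of 2
   themselves, and elements of M_x(n) dividing one another are equal. *)

Section MaximalDivisors.
Variables (R : realType) (x : R) (n : nat).
Hypothesis n_gt0 : (0 < n)%N.

Lemma mem_MxP d :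
  reflect [/\ (d %| n)%N, d%:R <= x &
           forall d', (d' %| n)%N -> d'%:R <= x -> (d %| d')%N -> d' = d]
          (d \in Mx x n).
Proof.
rewrite mem_filter -dvdn_divisors //; apply: (iffP andP) => [[/andP[dx /allP dmax] dn]|].
  split=> // d' d'n d'x dd'; apply/eqP.
  by have := dmax d'; rewrite -dvdn_divisors // d'n d'x dd' => /(_ isT).
case=> dn dx dmax; rewrite dx dn; split=> //; apply/allP => d'.
rewrite -dvdn_divisors // => d'n; apply/implyP => d'x; apply/implyP => dd'.
by rewrite (dmax d').
Qed.

Lemma Mx_mul_gt d e :
  d \in Mx x n -> (1 < e)%N -> (d * e %| n)%N -> x < (d * e)%:R.
Proof.
case/mem_MxP=> dn _ dmax e_gt1 den; rewrite ltNge; apply/negP => dex.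
have d_gt0 : (0 < d)%N by apply: dvdn_gt0 dn.
have := dmax _ den dex (dvdn_mulr _ (dvdnn d)); nia.
Qed.

Lemma Mx_dvd_eq d d' : d \in Mx x n -> d' \in Mx x n -> (d %| d')%N -> d' = d.
Proof. by case/mem_MxP=> _ _ dmax /mem_MxP[d'n d'x _]; apply: dmax. Qed.

Lemma mem_Mx_prime d :
  (d %| n)%N -> d%:R <= x ->
  (forall p, prime p -> (d * p %| n)%N -> x < (d * p)%:R) -> d \in Mx x n.
Proof.
move=> dn dx dp; apply/mem_MxP; split=> // d' d'n d'x /dvdnP[t def_d'].
have d'_gt0 : (0 < d')%N by apply: dvdn_gt0 d'n.
have [t_le1|t_gt1] := leqP t 1%N.
  by move: d'_gt0; rewrite def_d'; case: t {def_d'} t_le1 => [|[|]] // _; rewrite mul1n.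
have dpd' : (d * pdiv t %| d')%N by rewrite def_d' mulnC dvdn_mul ?pdiv_dvd.
have := dp _ (pdiv_prime t_gt1) (dvdn_trans dpd' d'n).
by rewrite ltNge (le_trans _ d'x) // ler_nat dvdn_leq.
Qed.

End MaximalDivisors.

Lemma le_min_ratio (F : realFieldType) (u v l l' : nat) :
  (0 < v)%N -> (0 < l')%N ->
  ((u%:R / v%:R : F) <= Num.min 1 (l%:R / l'%:R)) =
  (u <= v)%N && (u * l' <= l * v)%N.
Proof.
move=> v_gt0 l'_gt0; rewrite le_min !ler_pdivrMr ?ltr0n // mul1r ler_nat.
by rewrite mulrAC ler_pdivlMr ?ltr0n // -!natrM ler_nat.
Qed.

Lemma eq_pow2z_mul_nat (F : numFieldType) (d d' : nat) (j : int) :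
  (d%:R : F) = 2%:R ^ j * d'%:R ->
  exists i : nat, (d = 2 ^ i * d')%N \/ (d' = 2 ^ i * d)%N.
Proof.
case: j => i; rewrite ?NegzE -?exprnN -?exprnP => E.
  by exists i; left; apply/eqP; rewrite -(eqr_nat F) natrM natrX E.
exists i.+1; right; apply/eqP; rewrite -(eqr_nat F) natrM natrX E mulrA.
by rewrite mulfV ?mul1r // expf_neq0 // pnatr_eq0.
Qed.

Lemma leq_cofactor_mul (d e c c' l l' p A : nat) :
  (0 < c')%N -> (c' * l <= l' * c)%N -> (l' <= p)%N ->
  (c * d <= A * (c' * e))%N -> (d * l <= A * e * p)%N.
Proof.
move=> c'_gt0 ratio l'_le cd_le; rewrite -(leq_pmul2l c'_gt0).
have := leq_mul (leqnn d) ratio.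
have := leq_mul l'_le (leqnn (d * c)).
have := leq_mul (leqnn p) cd_le.
lia.
Qed.

Section ReducingFacts.
Variables (n m : nat) (f : nat -> nat).
Hypothesis f_red : reducing n m f.

Lemma reducing_dvd d : (d %| n)%N -> (f d %| m)%N.
Proof. by case: f_red => + _; apply. Qed.

Lemma reducing_le d : (d %| n)%N -> (f d <= d)%N.
Proof. by case: f_red => _ [+ _]; apply. Qed.

Lemma reducing_cofactor d :
  (0 < n)%N -> (d %| n)%N ->
  (m %/ f d <= n %/ d)%N /\
  (m %/ f d * pdiv (n %/ d) <= pdiv (m %/ f d) * (n %/ d))%N.
Proof.
move=> n_gt0 dn; case: f_red => _ [_ [+ _]] => /(_ d dn).
have d_gt0 : (0 < d)%N by apply: dvdn_gt0 dn.
rewrite /lpf le_min_ratio ?pdiv_gt0 // => [/andP //|].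
by rewrite divn_gt0 // dvdn_leq.
Qed.

Lemma reducing_pow2 d d' i :
  (d %| n)%N -> (d' %| n)%N -> f d = (2 ^ i * f d')%N ->
  exists j : nat, (d = 2 ^ j * d')%N \/ (d' = 2 ^ j * d)%N.
Proof.
move=> dn d'n E; case: f_red => _ [_ [_ /(_ d d' dn d'n)]] [|j].
  by exists (Posz i); rewrite E natrM natrX -exprnP.
exact: eq_pow2z_mul_nat.
Qed.

End ReducingFacts.

Section Pow2Cap.
Variables (R : realDomainType) (x : R) (e K : nat).

Definition pow2_cap : nat := (\max_(j < K.+1 | ((2 ^ j * e)%:R <= x)%R) j)%N.

Lemma pow2_cap_le : (pow2_cap <= K)%N.
Proof. by apply/bigmax_leqP => j _; rewrite -ltnS ltn_ord. Qed.

Lemma pow2_capP : e%:R <= x -> (2 ^ pow2_cap * e)%:R <= x.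
Proof.
move=> ex; rewrite /pow2_cap (bigop.bigmax_eq_arg ord0) ?expn0 ?mul1n //.
by case: arg_maxnP; rewrite ?expn0 ?mul1n.
Qed.

Lemma pow2_cap_max : (pow2_cap < K)%N -> x < (2 ^ pow2_cap.+1 * e)%:R.
Proof.
move=> below; rewrite ltNge; apply/negP => next_le.
have := leq_bigmax_cond (P := fun j : 'I_K.+1 => (2 ^ j * e)%:R <= x) (F := val)
  (Ordinal (below : pow2_cap.+1 < K.+1)%N) next_le.
by rewrite ltnn.
Qed.

End Pow2Cap.

Section LiftToPowerOfTwo.
Variables (R : realType) (x : R) (m n a : nat) (f : nat -> nat).
Hypotheses (m_gt0 : (0 < m)%N) (n_gt0 : (0 < n)%N) (n_le : (n <= 2 ^ a * m)%N).
Hypothesis f_red : reducing n m f.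

Definition lift_exp d := pow2_cap x (f d) (a + logn 2 (m %/ f d)).
Definition lift d := (2 ^ lift_exp d * f d)%N.

Lemma lift_dvd d : (d %| n)%N -> (lift d %| 2 ^ a * m)%N.
Proof.
move=> dn; have fm := reducing_dvd f_red dn.
rewrite /lift -{1}(divnK fm) mulnA dvdn_pmul2r ?(dvdn_gt0 m_gt0 fm) //.
apply: dvdn_trans (dvdn_exp2l 2 (pow2_cap_le _ _ _)) _.
by rewrite expnD dvdn_pmul2l ?expn_gt0 // pfactor_dvdnn.
Qed.

Lemma lift_le d : d \in Mx x n -> (lift d)%:R <= x.
Proof.
case/(mem_MxP _ n_gt0) => dn dx _; apply: pow2_capP; apply: le_trans dx.
by rewrite ler_nat (reducing_le f_red dn).
Qed.

Lemma Mx_lt_pow2_mul d p :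
  d \in Mx x n -> prime p -> (p %| m %/ f d)%N -> x < (2 ^ a * f d * p)%:R.
Proof.
move=> dM p_pr pc'; have [dn _ _] := mem_MxP _ n_gt0 _ dM.
have fm := reducing_dvd f_red dn.
have [c'_le_c ratio] := reducing_cofactor f_red n_gt0 dn.
have def_n : n = (n %/ d * d)%N by rewrite divnK.
have def_m : m = (m %/ f d * f d)%N by rewrite divnK.
have c'_gt0 : (0 < m %/ f d)%N.
  by rewrite divn_gt0 ?(dvdn_gt0 m_gt0 fm) // (dvdn_leq m_gt0 fm).
have c'_gt1 : (1 < m %/ f d)%N := leq_trans (prime_gt1 p_pr) (dvdn_leq c'_gt0 pc').
have c_gt1 : (1 < n %/ d)%N by apply: leq_trans c'_le_c.
have lpf_le : (pdiv (m %/ f d) <= p)%N by apply: pdiv_min_dvd (prime_gt1 p_pr) pc'.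
have d_lpf_dvd : (d * pdiv (n %/ d) %| n)%N.
  by rewrite {2}def_n mulnC dvdn_pmul2r ?pdiv_dvd ?(dvdn_gt0 n_gt0 dn).
apply: lt_le_trans (Mx_mul_gt n_gt0 dM (prime_gt1 (pdiv_prime c_gt1)) d_lpf_dvd) _.
rewrite ler_nat; apply: leq_cofactor_mul c'_gt0 ratio lpf_le _.
by rewrite -def_n -def_m.
Qed.

Lemma lift_mem d : d \in Mx x n -> lift d \in Mx x (2 ^ a * m).
Proof.
move=> dM; have [dn _ _] := mem_MxP _ n_gt0 _ dM.
have fd_gt0 : (0 < f d)%N := dvdn_gt0 m_gt0 (reducing_dvd f_red dn).
apply: mem_Mx_prime; rewrite ?muln_gt0 ?expn_gt0 ?m_gt0 ?lift_dvd ?lift_le //.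
move=> p p_pr lift_p_dvd; have p_gt1 := prime_gt1 p_pr.
have := pow2_cap_le x (f d) (a + logn 2 (m %/ f d)).
rewrite leq_eqVlt => /orP[/eqP capped|below].
  have pc' : (p %| m %/ f d)%N.
    move: lift_p_dvd; rewrite /lift /lift_exp capped expnD.
    rewrite -{2}(divnK (reducing_dvd f_red dn)) -!mulnA dvdn_pmul2l ?expn_gt0 //.
    rewrite mulnCA [in X in (_ %| X)%N]mulnC dvdn_pmul2l //.
    exact: dvdn_trans (dvdn_mull _ (dvdnn p)).
  apply: lt_le_trans (Mx_lt_pow2_mul dM p_pr pc') _.
  rewrite ler_nat /lift /lift_exp capped expnD -!mulnA leq_pmul2l ?expn_gt0 //.
  by rewrite leq_pmull ?expn_gt0.
apply: lt_le_trans (pow2_cap_max below) _.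
by rewrite ler_nat /lift expnS -mulnA mulnC leq_mul2l p_gt1 orbT.
Qed.

Lemma lift_inj : {in Mx x n &, injective lift}.
Proof.
suff lift_inj_le d1 d2 : d1 \in Mx x n -> d2 \in Mx x n ->
    (lift_exp d1 <= lift_exp d2)%N -> lift d1 = lift d2 -> d1 = d2.
  move=> d1 d2 M1 M2 E; have [le12|/ltnW le21] := leqP (lift_exp d1) (lift_exp d2).
    exact: lift_inj_le.
  exact/esym/lift_inj_le.
move=> M1 M2 le12 E; have [d1n _ _] := mem_MxP _ n_gt0 _ M1.
have [d2n _ _] := mem_MxP _ n_gt0 _ M2.
have f12 : f d1 = (2 ^ (lift_exp d2 - lift_exp d1) * f d2)%N.
  apply/eqP; rewrite -(eqn_pmul2l (expn_gt0 2 (lift_exp d1))) mulnA -expnD subnKC //.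
  by apply/eqP.
have [j [def_d1|def_d2]] := reducing_pow2 f_red d1n d2n f12.
  by rewrite def_d1 in M1 *; apply: (Mx_dvd_eq n_gt0 M2 M1); apply: dvdn_mull.
by rewrite def_d2 in M2 *; apply/esym/(Mx_dvd_eq n_gt0 M1 M2)/dvdn_mull.
Qed.

End LiftToPowerOfTwo.

Theorem theorem3p5 (m n a : nat) :
  (0 < m)%N -> (0 < n)%N -> reduces n m ->
  (* a is the smallest integer with 2^a m >= n *)
  (n <= 2 ^ a * m)%N ->
  (forall b : int, b < a%:Z -> (2%:R ^ b * m%:R : rat) < n%:R) ->
  forall (R : realType) (x : R), (size (Mx x n) <= size (Mx x (2 ^ a * m)))%N.
Proof.
move=> m_gt0 n_gt0 [f f_red] n_le _ R x.
rewrite -(size_map (lift x m a f)); apply: uniq_leq_size.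
  rewrite map_inj_in_uniq ?filter_uniq ?divisors_uniq //.
  exact: lift_inj n_gt0 f_red.
by move=> _ /mapP[d dM ->]; exact: (lift_mem m_gt0 n_gt0 n_le f_red dM).
Qed.
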